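(* Let $G$ be a $k$-uniform $s$-cycle with $k\ge 3$ and $1\le s<\frac{k}{2}$. Then $\lambda(\mathcal{Q})=2+2\alpha_*^{k-2s}$, where $\alpha_*$ is the unique root in $(0,1)$ of $2\alpha^k+\alpha^{2s}-1=0$. When $k$ is even, also $\lambda(\mathcal{L})=2+2\alpha_*^{k-2s}$.
   Context: A $k$-uniform $s$-cycle with $m$ edges has vertex set $\mathbb{Z}_n$, $n=m(k-s)$ (vertex $n+i$ identified with $i$), and edges $e_j=\{j(k-s)+1,\ldots,j(k-s)+k\}$, $j=0,\ldots,m-1$; it is assumed that $n\ge 2k-s$. The degree $d_i$ of a vertex is the number of edges containing it. For a real tensor $\mathcal{T}$ of order $k$ and dimension $n$, $\lambda\in\mathbb{R}$ is an H-eigenvalue if there is nonzero $\mathbf{x}\in\mathbb{R}^n$ with $(\mathcal{T}\mathbf{x}^{k-1})_i=\lambda x_i^{k-1}$ for all $i$, where $(\mathcal{T}\mathbf{x}^{k-1})_i=\sum_{i_2,\ldots,i_k}t_{ii_2\ldots i_k}x_{i_2}\cdots x_{i_k}$; $\lambda(\mathcal{T})$ is the largest H-eigenvalue. The adjacency tensor $\mathcal{A}$ has entries $1/(k-1)!$ at $(i_1,\ldots,i_k)$ with $\{i_1,\ldots,i_k\}$ an edge and $0$ otherwise; $\mathcal{D}$ is diagonal with entries $d_i$; $\mathcal{L}=\mathcal{D}-\mathcal{A}$ (Laplacian tensor), $\mathcal{Q}=\mathcal{D}+\mathcal{A}$ (signless Laplacian tensor). Equivalently the H-eigen-equations read $\lambda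 x_i^{k-1}=d_ix_i^{k-1}\mp\sum_{e\ni i}\prod_{j\in e\setminus\{i\}}x_j$ (minus for $\mathcal{L}$, plus for $\mathcal{Q}$). *)

From HB Require Import structures.
From mathcomp Require Import all_boot all_order all_algebra.
From mathcomp Require Import reals.
Unset Printing Implicit Defensive.
Import Order.TTheory GRing.Theory Num.Theory.
Local Open Scope ring_scope.

(* k-uniform s-cycle with m edges: vertex set Z_n, n = m(k-s), represented by
   'I_(m*(k-s)); vertex n+i is identified with i (reduction mod n). *)
Definition scycle_edge (k s m : nat) (j : nat) : {set 'I_(m * (k - s))} :=
  [set v : 'I_(m * (k - s)) |
     [exists t : 'I_k, nat_of_ord v == ((j * (k - s) + t.+1) %% (m * (k - s)))%N]].

Definition scycle_deg (k s m : nat) (i : 'I_(m * (k - s))) : nat :=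
  #|[set j : 'I_m | i \in scycle_edge k s m j]|.

(* H-eigen-equations of D + sgn * A, written in the (equivalent) hypergraph form
     lam x_i^{k-1} = d_i x_i^{k-1} + sgn * sum_{e ∋ i} prod_{j in e \ i} x_j.
   sgn = 1 : signless Laplacian tensor Q = D + A;
   sgn = -1 : Laplacian tensor L = D - A. *)
Definition scycle_Heigvec {R : realType} (k s m : nat) (sgn lam : R)
    (x : 'I_(m * (k - s)) -> R) : Prop :=
  (exists i, x i != 0) /\
  forall i : 'I_(m * (k - s)),
    lam * x i ^+ (k - 1) =
      (scycle_deg k s m i)%:R * x i ^+ (k - 1)
      + sgn * \sum_(j < m | i \in scycle_edge k s m j)
                \prod_(v in scycle_edge k s m j :\ i) x v.

Definition scycle_Heig {R : realType} (k s m : nat) (sgn lam : R) : Prop :=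
  exists x : 'I_(m * (k - s)) -> R, scycle_Heigvec k s m sgn lam x.

Definition scycle_largest_Heig {R : realType} (k s m : nat) (sgn lam : R) : Prop :=
  scycle_Heig k s m sgn lam /\ forall mu : R, scycle_Heig k s m sgn mu -> mu <= lam.

Definition lambdaQ_is {R : realType} (k s m : nat) (lam : R) : Prop :=
  scycle_largest_Heig k s m 1 lam.

Definition lambdaL_is {R : realType} (k s m : nat) (lam : R) : Prop :=
  scycle_largest_Heig k s m (-1) lam.

From HB Require Import structures.
From mathcomp Require Import all_boot all_order all_algebra.
From mathcomp Require Import reals.
From mathcomp Require Import zify ring lra.
Import Order.TTheory GRing.Theory Num.Theory.
Local Open Scope ring_scope.

(* Write [q = k - s]. A vertex lies in two edges when its position inside its
   block of [q] consecutive vertices is below [s], and in one edge otherwise;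
   each edge contains [2 s] vertices of the first kind and [k - 2 s] of the
   second. Weighting them by [1] and by [alpha] gives every edge the product
   [alpha ^ (k - 2 s)], and the eigen-equations at both kinds of vertices
   reduce to [2 alpha ^ k + alpha ^ (2 s) = 1], so this positive vector is an
   H-eigenvector [y] of Q for [2 + 2 alpha ^ (k - 2 s)]. Comparing any
   H-eigenvector [x] of D + A or D - A with it at a vertex maximising
   [|x v| / y v] bounds the eigenvalue of [x] by the same number. For even [k],
   negating the weight of the unique vertex at position [s] of each edge
   negates all edge products and gives an H-eigenvector of L. *)

Section HypergraphEigenvectors.

Context {R : realFieldType} {T I : finType} {E : I -> {set T}}.

Local Notation edge_sum X i :=
  (\sum_(j | i \in E j) \prod_(v in E j :\ i) X v).

Lemma edge_sum_const_prod {X : T -> R} {P : R} :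
    (forall j, \prod_(v in E j) X v = P) ->
  forall i, X i != 0 -> edge_sum X i = #|[set j | i \in E j]|%:R * (P / X i).
Proof.
move=> prodE i Xi_neq0; rewrite -sum1_card natr_sum mulr_suml big_mkcond /=.
rewrite [RHS]big_mkcond /=; apply: eq_bigr => j _; rewrite inE.
case: ifP => // iEj; rewrite mul1r -(prodE j) (bigD1 i iEj) /= mulrC mulKf //.
by apply: eq_bigl => v; rewrite in_setD1 andbC.
Qed.

Context {r : nat} (card_edgeD1 : forall i j, i \in E j -> #|E j :\ i| = r).

Lemma norm_edge_sum_le (x Y : T -> R) (c : R) (i : T) :
    (forall v, `|x v| <= c * Y v) ->
  `|edge_sum x i| <= c ^+ r * edge_sum Y i.
Proof.
move=> le_xY; apply: (le_trans (ler_norm_sum _ _ _)).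
rewrite mulr_sumr; apply: ler_sum => j iEj; rewrite normr_prod.
rewrite -(card_edgeD1 _ _ iEj) -prodr_const -big_split /=.
by apply: ler_prod => v _; rewrite normr_ge0 le_xY.
Qed.

Lemma Heig_le_positive_Heig {d Y x : T -> R} {lamY sgn mu : R} :
    (forall i, 0 < Y i) ->
    (forall i, lamY * Y i ^+ r = d i * Y i ^+ r + edge_sum Y i) ->
    `|sgn| = 1 -> (exists i, x i != 0) ->
    (forall i, mu * x i ^+ r = d i * x i ^+ r + sgn * edge_sum x i) ->
  mu <= lamY.
Proof.
move=> Ypos eigY sgn_unit [i0 xi0_neq0] eigx.
pose ratio v := `|x v| / Y v.
case: (@arg_maxP _ _ _ i0 xpredT ratio isT) => i _ ratio_max.
set c := ratio i.
have le_xY v : `|x v| <= c * Y v by rewrite -ler_pdivrMr ?Ypos //; apply: ratio_max.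
have c_gt0 : 0 < c.
  by apply: lt_le_trans (ratio_max i0 isT); rewrite divr_gt0 ?normr_gt0.
have xi : `|x i| = c * Y i by rewrite /c /ratio divfK // gt_eqF ?Ypos.
have cYr_gt0 : 0 < (c * Y i) ^+ r by rewrite exprn_gt0 // mulr_gt0 ?Ypos.
have mu_dist : `|mu - d i| * (c * Y i) ^+ r = `|edge_sum x i|.
  by rewrite -xi -normrX -normrM mulrBl eigx addrC addKr normrM sgn_unit mul1r.
have lam_dist : (lamY - d i) * Y i ^+ r = edge_sum Y i.
  by rewrite mulrBl eigY addrC addKr.
have : `|mu - d i| <= lamY - d i.
  rewrite -(ler_pM2r cYr_gt0) mu_dist exprMn mulrCA lam_dist.
  exact: norm_edge_sum_le.
have := ler_norm (mu - d i); lra.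
Qed.

End HypergraphEigenvectors.

Lemma eq_divmod (q a b c d : nat) : (c < q)%N -> (d < q)%N ->
  (a * q + c == b * q + d)%N = (a == b) && (c == d).
Proof.
move=> c_lt_q d_lt_q; apply/eqP/andP => [e | [/eqP-> /eqP->] //].
by have := congr1 (edivn^~ q) e; rewrite /= !edivn_eq // => -[-> ->].
Qed.

Lemma modn_block (m q j t : nat) : (0 < m)%N -> (0 < q)%N ->
  ((j * q + t) %% (m * q) = (j + t %/ q) %% m * q + t %% q)%N.
Proof.
move=> m_gt0 q_gt0; rewrite {1}(divn_eq t q) addnA -mulnDl.
set x := (j + t %/ q)%N; rewrite {1}(divn_eq x m) mulnDl -mulnA -addnA modnMDl.
move: (ltn_pmod x m_gt0) (ltn_pmod t q_gt0).
move: (x %% m)%N (t %% q)%N => a b a_lt_m b_lt_q.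
by rewrite modn_small //; nia.
Qed.

Lemma ordS_neq {m : nat} (i : 'I_m) : (1 < m)%N -> ordS i != i.
Proof.
move=> m_gt1; apply/eqP => /(congr1 val) /=.
have [i1_lt_m | ] := ltnP i.+1 m; first by rewrite modn_small //; lia.
have := ltn_ord i => i_lt_m m_le_i1; have -> : i.+1 = m by lia.
by rewrite modnn; lia.
Qed.

Lemma prod_modn_split (R : pzSemiRingType) (f : nat -> R) (q k : nat) :
    (q <= k)%N -> (k <= 2 * q)%N ->
  \prod_(t < k) f (t %% q)%N = \prod_(c < q) f c * \prod_(c < k - q) f c.
Proof.
move=> q_le_k k_le_2q; rewrite -(big_mkord xpredT (fun t => f (t %% q)%N)).
rewrite -!(big_mkord xpredT f) (big_cat_nat (leq0n q) q_le_k) /=.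
congr (_ * _).
  by rewrite big_nat_cond [RHS]big_nat_cond; apply: eq_bigr => t /andP [/andP [_ /modn_small->]].
rewrite -{1}(add0n q) big_addn big_nat_cond [RHS]big_nat_cond.
by apply: eq_bigr => t /andP [/andP [_ t_lt] _]; rewrite modnDr modn_small //; lia.
Qed.

Lemma prod_ord_ltn (R : pzSemiRingType) (a b : R) (s q : nat) : (s <= q)%N ->
  \prod_(c < q) (if (c < s)%N then a else b) = a ^+ s * b ^+ (q - s).
Proof.
move=> s_le_q; rewrite -(big_mkord xpredT (fun c => if (c < s)%N then a else b)).
rewrite (big_cat_nat (leq0n s) s_le_q) /=.
rewrite (eq_big_nat _ _ (F2 := fun=> a)) => [|c /andP [_ ->] //].
rewrite [X in _ * X](eq_big_nat _ _ (F2 := fun=> b)) => [|c /andP [c_ge _]]; last first.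
  by rewrite ltnNge c_ge.
by rewrite !prodr_const_nat subn0.
Qed.

Lemma root_eigen_identity (R : fieldType) (al : R) (k s : nat) :
    al != 0 -> (2 * s < k)%N -> 2 * al ^+ k + al ^+ (2 * s) - 1 = 0 ->
  (2 + 2 * al ^+ (k - 2 * s)) * al ^+ (k - 1) =
  al ^+ (k - 1) + al ^+ (k - 2 * s) / al.
Proof.
move=> al_neq0 s2_lt_k root_al; set a := al ^+ (k - 2 * s - 1).
have al_k1 : al ^+ (k - 1) = a * al ^+ (2 * s) by rewrite -exprD; congr (_ ^+ _); lia.
have al_k2s : al ^+ (k - 2 * s) = a * al by rewrite -exprSr; congr (_ ^+ _); lia.
have al_k : al ^+ k = a * al * al ^+ (2 * s).
  by rewrite -al_k2s -exprD; congr (_ ^+ _); lia.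
rewrite al_k1 al_k2s mulfK //; rewrite al_k in root_al.
apply/eqP; rewrite -subr_eq0; apply/eqP.
by transitivity (a * (2 * (a * al * al ^+ (2 * s)) + al ^+ (2 * s) - 1));
  [ring | rewrite root_al mulr0].
Qed.

Lemma ltr_root_poly {R : realDomainType} {k s : nat} {a b : R} :
    (0 < k)%N -> (0 < s)%N -> 0 <= a -> a < b ->
  2 * a ^+ k + a ^+ (2 * s) < 2 * b ^+ k + b ^+ (2 * s).
Proof.
move=> k_gt0 s_gt0 a_ge0 a_lt_b.
have : a ^+ k < b ^+ k by rewrite ltrXn2r //; lia.
have : a ^+ (2 * s) < b ^+ (2 * s) by rewrite ltrXn2r //; lia.
lra.
Qed.

Lemma root_poly_inj {R : realDomainType} {k s : nat} {a b : R} :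
    (0 < k)%N -> (0 < s)%N -> 0 <= a -> 0 <= b ->
    2 * a ^+ k + a ^+ (2 * s) = 2 * b ^+ k + b ^+ (2 * s) ->
  a = b.
Proof.
move=> k_gt0 s_gt0 a_ge0 b_ge0; case: (ltgtP a b) => // [a_lt_b | b_lt_a].
  by have := ltr_root_poly k_gt0 s_gt0 a_ge0 a_lt_b; lra.
by have := ltr_root_poly k_gt0 s_gt0 b_ge0 b_lt_a; lra.
Qed.

Lemma exists_root_poly (R : rcfType) {k s : nat} : (0 < k)%N -> (0 < s)%N ->
  exists2 al : R, 0 < al < 1 & 2 * al ^+ k + al ^+ (2 * s) - 1 = 0.
Proof.
move=> k_gt0 s_gt0; pose p : {poly R} := 2%:P * 'X^k + 'X^(2 * s) - 1.
have pE x : p.[x] = 2 * x ^+ k + x ^+ (2 * s) - 1 by rewrite /p !hornerE.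
have s2_gt0 : (0 < 2 * s)%N by lia.
have p0 : p.[0] = -1 by rewrite pE !expr0n !gtn_eqF //= mulr0 add0r sub0r.
have p1 : p.[1] = 2 by rewrite pE !expr1n mulr1 addrK.
have p01 : p.[0] <= 0 <= p.[1] by rewrite p0 p1; apply/andP; split; lra.
have [x /andP [x_ge0 x_le1] /rootP px] := poly_ivt ler01 p01.
exists x; last by rewrite -pE.
rewrite !lt_neqAle x_ge0 x_le1 !andbT.
apply/andP; split; apply/eqP => x_eq; move: px.
  by rewrite -x_eq p0; lra.
by rewrite x_eq p1; lra.
Qed.

Section SCycle.

Variables k s m : nat.
Local Notation q := (k - s)%N.
Local Notation n := (m * (k - s))%N.

(* [scycle_pos v] is [v - 1] modulo [n], so that [e_j] is the set of vertices
   at positions [j q, ..., j q + k - 1]. *)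
Definition scycle_pos (v : nat) : nat := ((v + n.-1) %% n)%N.
Definition scycle_block (v : nat) : nat := (scycle_pos v %/ q)%N.
Definition scycle_class (v : nat) : nat := (scycle_pos v %% q)%N.
Definition scycle_vertex (j t : nat) : nat := ((j * q + t.+1) %% n)%N.

Hypotheses (s_gt0 : (0 < s)%N) (s2_lt_k : (2 * s < k)%N) (m_gt1 : (1 < m)%N).

Let q_gt0 : (0 < q)%N. Proof. lia. Qed.
Let n_gt0 : (0 < n)%N. Proof. by rewrite muln_gt0; apply/andP; split; lia. Qed.

Lemma scycle_pos_succ (x : nat) : scycle_pos (x.+1 %% n) = (x %% n)%N.
Proof.
rewrite /scycle_pos modnDml; have -> : (x.+1 + n.-1 = x + n)%N by lia.
by rewrite modnDr.
Qed.

Lemma scycle_class_vertex (j t : nat) : scycle_class (scycle_vertex j t) = (t %% q)%N.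
Proof.
rewrite /scycle_class /scycle_vertex addnS scycle_pos_succ modn_block //; last lia.
by rewrite modnMDl modn_mod.
Qed.

Lemma eq_succ_mod_scycle_pos (v x : nat) : (v < n)%N ->
  (v == x.+1 %% n)%N = (scycle_pos v == x %% n)%N.
Proof.
move=> v_lt_n; apply/eqP/eqP => [-> | pos_v]; first exact: scycle_pos_succ.
rewrite -(modn_small v_lt_n) -addn1 -modnDml -pos_v modnDml.
have -> : (v + n.-1 + 1 = v + n)%N by lia.
by rewrite modnDr.
Qed.

Lemma mem_scycle_edge (j : 'I_m) (v : 'I_n) :
  (v \in scycle_edge k s m j) =
  (scycle_block v == j) || (scycle_class v < s)%N && (scycle_block v == ordS j).
Proof.
have block_lt : (scycle_block v < m)%N by rewrite ltn_divLR // ltn_pmod.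
have class_lt : (scycle_class v < q)%N by exact: ltn_pmod.
rewrite inE (@eq_existsb _ _ (fun t : 'I_k =>
  (scycle_block v == (j + t %/ q) %% m)%N && (scycle_class v == t %% q)%N)); last first.
  move=> t; rewrite addnS eq_succ_mod_scycle_pos // modn_block //; last lia.
  by rewrite {1}(divn_eq (scycle_pos v) q) eq_divmod ?ltn_pmod.
move: (scycle_block v) (scycle_class v) block_lt class_lt => b c b_lt c_lt.
apply/existsP/orP => [[t /andP [/eqP-> /eqP->]] | ].
  have t_lt_k := ltn_ord t.
  have [t_lt_q | q_le_t] := ltnP t q.
    by left; rewrite divn_small // addn0 modn_small.
  have t_eq : t = (1 * q + (t - q))%N :> nat by lia.
  rewrite t_eq divnMDl // divn_small ?addn0 ?addn1; last lia.
  by right; rewrite modnMDl modn_small ?eqxx ?andbT; lia.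
move=> [/eqP-> | /andP [c_lt_s /eqP->]].
  have c_lt_k : (c < k)%N by lia.
  exists (Ordinal c_lt_k).
  by rewrite /= divn_small // addn0 (modn_small (ltn_ord j)) (modn_small c_lt) !eqxx.
have qc_lt_k : (q + c < k)%N by lia.
exists (Ordinal qc_lt_k).
by rewrite /= divnDl // divnn q_gt0 divn_small //= addn1 modnDl (modn_small c_lt) !eqxx.
Qed.

Lemma scycle_deg_class (v : 'I_n) :
  scycle_deg k s m v = if (scycle_class v < s)%N then 2 else 1.
Proof.
have block_lt : (scycle_block v < m)%N by rewrite ltn_divLR // ltn_pmod.
pose b : 'I_m := Ordinal block_lt.
have b_neq : b != ord_pred b.
  by apply/eqP => b_eq; have := ordS_neq b m_gt1; rewrite {1}b_eq ord_predK eqxx.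
rewrite /scycle_deg; have -> : [set j : 'I_m | v \in scycle_edge k s m j] =
          if (scycle_class v < s)%N then [set b; ord_pred b] else [set b].
  apply/setP => j; rewrite inE mem_scycle_edge.
  have -> : (scycle_block v == ordS j) = (j == ord_pred b).
    by rewrite -(inj_eq (@ordS_inj m)) ord_predK eq_sym.
  by case: ifP; rewrite !inE /= ?orbF eq_sym.
by case: ifP; rewrite ?cards2 ?b_neq ?cards1.
Qed.

Let k_lt_n : (k < n)%N.
Proof. by apply: (@leq_trans (2 * q)); [lia | rewrite leq_mul2r m_gt1 orbT]. Qed.

Lemma scycle_edge_imset (j : nat) :
  exists2 f : 'I_k -> 'I_n, injective f &
    scycle_edge k s m j = f @: setT /\ forall t, val (f t) = scycle_vertex j t.
Proof.
pose f t := Ordinal (ltn_pmod (j * q + t.+1) n_gt0).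
exists f => [t1 t2 /(congr1 val) /= /eqP | ]; last first.
  split=> //; apply/setP => v; rewrite inE; apply/existsP/imsetP => [[t /eqP v_eq] | [t _ ->]].
    by exists t => //; apply: val_inj.
  by exists t.
have := ltn_ord t1; have := ltn_ord t2 => t2_lt t1_lt.
rewrite !addnS -!addSn eqn_modDl !modn_small; try lia.
by move=> /eqP t_eq; apply: val_inj.
Qed.

Lemma card_scycle_edge (j : nat) : #|scycle_edge k s m j| = k.
Proof.
by have [f f_inj [-> _]] := scycle_edge_imset j; rewrite card_imset // cardsT card_ord.
Qed.

Lemma card_scycle_edgeD1 (i : 'I_n) (j : 'I_m) :
  i \in scycle_edge k s m j -> #|scycle_edge k s m j :\ i| = (k - 1)%N.
Proof.
move=> iEj; have := cardsD1 i (scycle_edge k s m j).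
by rewrite iEj card_scycle_edge add1n => k_eq; rewrite [in RHS]k_eq subn1.
Qed.

Lemma prod_scycle_edge_class (R : comPzSemiRingType) (f : nat -> R) (j : nat) :
  \prod_(v in scycle_edge k s m j) f (scycle_class v) =
  \prod_(c < q) f c * \prod_(c < s) f c.
Proof.
have [g g_inj [-> g_val]] := scycle_edge_imset j.
rewrite big_imset /=; last by move=> t1 t2 _ _; apply: g_inj.
rewrite (eq_bigl xpredT) => [|t]; last by rewrite inE.
rewrite (eq_bigr (fun t : 'I_k => f (t %% q)%N)) => [|t _]; last first.
  by rewrite g_val scycle_class_vertex.
rewrite prod_modn_split; try lia.
by have -> : (k - q = s)%N by lia.
Qed.

Variable R : realType.

Definition scycle_perron (al : R) (v : 'I_n) : R :=
  if (scycle_class v < s)%N then 1 else al.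

Definition scycle_sign (v : 'I_n) : R := if scycle_class v == s then -1 else 1.

Lemma prod_scycle_perron (al : R) (j : 'I_m) :
  \prod_(v in scycle_edge k s m j) scycle_perron al v = al ^+ (k - 2 * s).
Proof.
rewrite (prod_scycle_edge_class _ (fun c => if (c < s)%N then 1 else al)).
rewrite prod_ord_ltn; last lia.
rewrite big1 => [|c _]; last by rewrite ltn_ord.
by rewrite expr1n mul1r mulr1; congr (_ ^+ _); lia.
Qed.

Lemma prod_scycle_sign (j : 'I_m) :
  \prod_(v in scycle_edge k s m j) scycle_sign v = -1.
Proof.
rewrite (prod_scycle_edge_class _ (fun c => if c == s then -1 else 1)).
have s_lt_q : (s < q)%N by lia.
rewrite [X in X * _](bigD1 (Ordinal s_lt_q)) //= eqxx.
by rewrite !big1 ?mulr1 // => c c_neq; [rewrite ltn_eqF | rewrite ifN].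
Qed.

Section Perron.

Variable al : R.
Hypotheses (al_gt0 : 0 < al) (root_al : 2 * al ^+ k + al ^+ (2 * s) - 1 = 0).

Local Notation P := (al ^+ (k - 2 * s)).
Local Notation lam := (2 + 2 * P).

Lemma scycle_perron_eq (i : 'I_n) :
  lam * scycle_perron al i ^+ (k - 1) =
  (scycle_deg k s m i)%:R * scycle_perron al i ^+ (k - 1)
  + (scycle_deg k s m i)%:R * (P / scycle_perron al i).
Proof.
rewrite scycle_deg_class /scycle_perron; case: ifP => _.
  by rewrite expr1n divr1; ring.
by rewrite mulr1n !mul1r root_eigen_identity // gt_eqF.
Qed.

Lemma scycle_perron_gt0 (v : 'I_n) : 0 < scycle_perron al v.
Proof. by rewrite /scycle_perron; case: ifP. Qed.

Lemma scycle_perron_Heigvec : scycle_Heigvec k s m 1 lam (scycle_perron al).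
Proof.
split; first by exists (Ordinal n_gt0); rewrite gt_eqF ?scycle_perron_gt0.
move=> i; rewrite mul1r scycle_perron_eq.
by rewrite (edge_sum_const_prod (prod_scycle_perron al)) // gt_eqF ?scycle_perron_gt0.
Qed.

Lemma scycle_signed_perron_Heigvec : ~~ odd k ->
  scycle_Heigvec k s m (-1) lam (fun v => scycle_sign v * scycle_perron al v).
Proof.
move=> k_even.
have x_neq0 v : scycle_sign v * scycle_perron al v != 0.
  apply: mulf_neq0; last by rewrite gt_eqF ?scycle_perron_gt0.
  by rewrite /scycle_sign; case: ifP => _; rewrite ?oppr_eq0 oner_eq0.
split; first by exists (Ordinal n_gt0).
have prod_signed (j : 'I_m) :
    \prod_(v in scycle_edge k s m j) (scycle_sign v * scycle_perron al v) = - P.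
  by rewrite big_split /= prod_scycle_sign prod_scycle_perron mulN1r.
move=> i; rewrite (edge_sum_const_prod prod_signed) //.
have k1_odd : odd (k - 1) by rewrite oddB ?(negbTE k_even) //; lia.
have := scycle_perron_eq i; rewrite /scycle_sign; case: ifP => _ y_eq.
  rewrite !mulN1r exprNn -signr_odd k1_odd expr1 mulN1r invrN mulrNN !mulrN y_eq.
  ring.
by rewrite !mul1r mulNr y_eq; ring.
Qed.

Lemma scycle_perron_largest (sgn : R) : `|sgn| = 1 ->
  scycle_Heig k s m sgn lam -> scycle_largest_Heig k s m sgn lam.
Proof.
move=> sgn_unit Heig_lam; split=> // mu [x [x_neq0 eig_x]].
have [_ eig_y] := scycle_perron_Heigvec.
apply: (Heig_le_positive_Heig card_scycle_edgeD1 scycle_perron_gt0 _ sgn_unit x_neq0 eig_x).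
by move=> i; rewrite eig_y mul1r.
Qed.

End Perron.

End SCycle.

Theorem theorem5p1 (R : realType) (k s m : nat)
  (hk : (3 <= k)%N) (hs1 : (1 <= s)%N) (hs2 : (2 * s < k)%N)
  (hn : (2 * k - s <= m * (k - s))%N) :
  exists alpha : R,
    [/\ 0 < alpha < 1,
        2 * alpha ^+ k + alpha ^+ (2 * s) - 1 = 0,
        (forall beta : R, 0 < beta < 1 ->
           2 * beta ^+ k + beta ^+ (2 * s) - 1 = 0 -> beta = alpha),
        lambdaQ_is k s m (2 + 2 * alpha ^+ (k - 2 * s)) &
        (~~ odd k -> lambdaL_is k s m (2 + 2 * alpha ^+ (k - 2 * s)))].
Proof.
have k_gt0 : (0 < k)%N by lia.
have m_gt1 : (1 < m)%N.
  rewrite ltnNge; apply/negP => m_le1.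
  by have := leq_mul m_le1 (leqnn (k - s)); lia.
have [al al01 root_al] := exists_root_poly R k_gt0 hs1.
have /andP [al_gt0 _] := al01.
exists al; split=> //.
- move=> beta /andP [beta_gt0 _] root_beta.
  by apply: root_poly_inj k_gt0 hs1 (ltW beta_gt0) (ltW al_gt0) _; lra.
- apply: scycle_perron_largest (normr1 _) _ => //.
  by exists (scycle_perron k s m R al); apply: scycle_perron_Heigvec.
- move=> k_even; apply: scycle_perron_largest (normrN1 _) _ => //.
  by eexists; apply: scycle_signed_perron_Heigvec.
Qed.
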